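(* Fix $R\in\mathbb R$ and $t_1<t_2$. For all $\xi,\zeta\in\mathbb R$ and $u,v\le0$, $$\int_{\mathbb R_-}du\,\Phi^\xi_{t_1}(u)T^0_{t_1,t_2}(u,v)=\Phi^\xi_{t_2}(v),\qquad\int_{\mathbb R_-}dv\,T^0_{t_1,t_2}(u,v)\Psi^\zeta_{t_2}(v)=\Psi^\zeta_{t_1}(u).$$
   Context: $\operatorname{Ai}^{(s)}(x)=e^{2s^3/3+xs}\operatorname{Ai}(s^2+x)$; $\Phi_t^\xi(u)=\operatorname{Ai}^{(t)}(R+\xi+u)-\operatorname{Ai}^{(t)}(R+\xi-u)$; $\Psi_t^\zeta(u)=\operatorname{Ai}^{(-t)}(R+\zeta+u)-\operatorname{Ai}^{(-t)}(R+\zeta-u)$. $T^0_{t_1,t_2}(u,v)=\phi_{t_2-t_1}(u,v)-\phi_{t_2-t_1}(u,-v)$ for $u,v\le0$, with $\phi_t(x,y)=(4\pi t)^{-1/2}e^{-(x-y)^2/(4t)}$; this is the transition density of a Brownian motion with diffusion coefficient 2 killed when it exceeds level $0$. *)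

From Stdlib Require Import Reals.
From Coquelicot Require Import Coquelicot.
Open Scope R_scope.

Definition Ai (x : R) : R :=
  / PI * real (Lim (fun b => RInt (fun t => cos (t ^ 3 / 3 + x * t)) 0 b) p_infty).

Definition Ai_s (s x : R) : R := exp (2 * s ^ 3 / 3 + x * s) * Ai (s ^ 2 + x).

(* Phi_t^xi(u) and Psi_t^zeta(u); Rc is the fixed real parameter R of the paper *)
Definition Phi (Rc xi t u : R) : R := Ai_s t (Rc + xi + u) - Ai_s t (Rc + xi - u).
Definition Psi (Rc zeta t u : R) : R := Ai_s (- t) (Rc + zeta + u) - Ai_s (- t) (Rc + zeta - u).

Definition phi_heat (t x y : R) : R := / sqrt (4 * PI * t) * exp (- (x - y) ^ 2 / (4 * t)).

Definition T0 (t1 t2 u v : R) : R := phi_heat (t2 - t1) u v - phi_heat (t2 - t1) u (- v).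

(* The heart is the heat-semigroup identity
   [int Ai_s t x * phi_heat s x y dx = Ai_s (t + s) y].
   Shifting the oscillatory Airy integral to the line [Im k = sigma > 0] (Cauchy's theorem on
   rectangles, whose vertical sides vanish at infinity) gives the absolutely convergent form
   [2 pi Ai_s t x = int exp (2 t^3/3 + x t) Re (exp (i (z^3/3 + (t^2 + x) z))) dk],
   [z = k + i sigma], which is Gaussian in [k] and exponential in [x]. Against the heat kernel the
   double integral converges absolutely, so Fubini applies; the [x]-integral is the heat flow of
   [exp (c x) cos (kap x + be)], a Gaussian integral, and it produces exactly the integrand of
   [Ai_s (t + s) y] on the line [Im k = sigma + s]. Finally [Phi] and [T0] are odd under
   [w |-> - w], so by the method of images the integral over [R_-] is the full-line convolution of
   [Ai_s t1] with the heat kernel, evaluated at [R + xi + v] and [R + xi - v]; [Psi] is the same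
   statement for [- t2], [T0] being symmetric. *)

From Stdlib Require Import Reals Lra Psatz FunctionalExtensionality.
From Coquelicot Require Import Coquelicot.
Open Scope R_scope.

(* Integrals of real functions live in a normed-module carrier convertible to [R]; [ring] and
   [lra] need the equation retyped at [R]. *)
Ltac as_R_eq := match goal with |- @eq _ ?a ?b => change (@eq R a b) end.

Lemma ex_RInt_extR (f g : R -> R) a b :
  (forall x, f x = g x) -> ex_RInt f a b -> ex_RInt g a b.
Proof. now intros E; rewrite (functional_extensionality f g E). Qed.

Lemma RInt_extR (f g : R -> R) a b : (forall x, f x = g x) -> RInt f a b = RInt g a b.
Proof. now intros E; rewrite (functional_extensionality f g E). Qed.

Lemma RInt_plusR (f g : R -> R) a b : ex_RInt f a b -> ex_RInt g a b ->
  RInt (fun x => f x + g x) a b = RInt f a b + RInt g a b.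
Proof. exact (RInt_plus (V := R_CompleteNormedModule) f g a b). Qed.

Lemma RInt_minusR (f g : R -> R) a b : ex_RInt f a b -> ex_RInt g a b ->
  RInt (fun x => f x - g x) a b = RInt f a b - RInt g a b.
Proof. exact (RInt_minus (V := R_CompleteNormedModule) f g a b). Qed.

Lemma RInt_scalR (f : R -> R) c a b : ex_RInt f a b ->
  RInt (fun x => c * f x) a b = c * RInt f a b.
Proof. intros H; exact (RInt_scal (V := R_CompleteNormedModule) f a b c H). Qed.

Lemma RInt_ChaslesR (f : R -> R) a b c : ex_RInt f a b -> ex_RInt f b c ->
  RInt f a b + RInt f b c = RInt f a c.
Proof. exact (RInt_Chasles (V := R_CompleteNormedModule) f a b c). Qed.

Lemma RInt_swapR (f : R -> R) a b : ex_RInt f a b -> RInt f b a = - RInt f a b.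
Proof. intros H; now rewrite <- (opp_RInt_swap (V := R_CompleteNormedModule)). Qed.

Lemma RInt_constR (c a b : R) : RInt (fun _ => c) a b = (b - a) * c.
Proof. exact (RInt_const (V := R_CompleteNormedModule) a b c). Qed.

Lemma ex_RInt_plusR (f g : R -> R) a b :
  ex_RInt f a b -> ex_RInt g a b -> ex_RInt (fun x => f x + g x) a b.
Proof. exact (ex_RInt_plus (V := R_NormedModule) f g a b). Qed.

Lemma ex_RInt_minusR (f g : R -> R) a b :
  ex_RInt f a b -> ex_RInt g a b -> ex_RInt (fun x => f x - g x) a b.
Proof. exact (ex_RInt_minus (V := R_NormedModule) f g a b). Qed.

Lemma ex_RInt_scalR (f : R -> R) c a b : ex_RInt f a b -> ex_RInt (fun x => c * f x) a b.
Proof. exact (ex_RInt_scal (V := R_NormedModule) f a b c). Qed.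

Lemma ex_RInt_continuousR (f : R -> R) a b : (forall z, continuous f z) -> ex_RInt f a b.
Proof. intros H; apply (ex_RInt_continuous (V := R_CompleteNormedModule)); auto. Qed.

Lemma ex_derive_continuousR (f : R -> R) x : ex_derive f x -> continuous f x.
Proof. exact (ex_derive_continuous (K := R_AbsRing) (V := R_NormedModule) f x). Qed.

Lemma ex_RInt_comp_oppR (f : R -> R) a b :
  ex_RInt f (- a) (- b) -> ex_RInt (fun y => f (- y)) a b.
Proof.
  intros H; apply ex_RInt_comp_opp in H.
  apply ex_RInt_extR with (fun y => -1 * opp (f (- y))).
  - intros; unfold opp; simpl; ring.
  - now apply ex_RInt_scalR.
Qed.

Lemma RInt_comp_oppR (f : R -> R) a b : ex_RInt f (- a) (- b) ->
  RInt (fun y => f (- y)) a b = - RInt f (- a) (- b).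
Proof.
  intros H.
  rewrite <- (is_RInt_unique _ _ _ _ (is_RInt_comp_opp _ _ _ _ (RInt_correct _ _ _ H))).
  rewrite (RInt_extR (fun y => opp (f (- y))) (fun y => -1 * f (- y)))
    by (intros; unfold opp; simpl; ring).
  rewrite RInt_scalR by now apply ex_RInt_comp_oppR.
  simpl; generalize (RInt (fun y => f (- y)) a b); intros X; simpl in X; as_R_eq; ring.
Qed.

Lemma ex_RInt_comp_linR (f : R -> R) u v a b : u <> 0 -> (forall a b, ex_RInt f a b) ->
  ex_RInt (fun y => f (u * y + v)) a b.
Proof.
  intros Hu Hf.
  apply ex_RInt_extR with (fun y => / u * (u * f (u * y + v))).
  - intros; field; auto.
  - apply ex_RInt_scalR, (ex_RInt_comp_lin (V := R_NormedModule)); auto.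
Qed.

Lemma RInt_comp_linR (f : R -> R) u v a b : u <> 0 -> (forall a b, ex_RInt f a b) ->
  RInt (fun y => f (u * y + v)) a b = / u * RInt f (u * a + v) (u * b + v).
Proof.
  intros Hu Hf.
  rewrite <- (RInt_comp_lin f u v a b (Hf _ _)).
  rewrite (RInt_extR (fun y => scal u (f (u * y + v))) (fun y => u * f (u * y + v)))
    by reflexivity.
  rewrite RInt_scalR by now apply ex_RInt_comp_linR.
  simpl; generalize (RInt (fun y => f (u * y + v)) a b); intros X; simpl in X; as_R_eq.
  field; auto.
Qed.

Lemma RInt_abs_le (f h : R -> R) a b : a <= b -> ex_RInt f a b -> ex_RInt h a b ->
  (forall x, a <= x <= b -> Rabs (f x) <= h x) -> Rabs (RInt f a b) <= RInt h a b.
Proof.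
  intros Hab Hf Hh H.
  eapply Rle_trans; [now apply abs_RInt_le|].
  apply RInt_le; auto; [now apply ex_RInt_norm|].
  intros x Hx; apply H; lra.
Qed.

Lemma RInt_ge0 (h : R -> R) a b : a <= b -> ex_RInt h a b ->
  (forall x, a <= x <= b -> 0 <= h x) -> 0 <= RInt h a b.
Proof. intros; apply RInt_ge_0; auto; intros; apply H1; lra. Qed.

Lemma RInt_abs_le_const (f : R -> R) a b M : ex_RInt f a b ->
  (forall t, Rmin a b <= t <= Rmax a b -> Rabs (f t) <= M) ->
  Rabs (RInt f a b) <= Rabs (b - a) * M.
Proof.
  intros Hf HM. destruct (Rle_dec a b) as [Hab|Hab].
  - rewrite (Rabs_right (b - a)) by lra. apply abs_RInt_le_const; auto.
    intros; apply HM. rewrite Rmin_left, Rmax_right; lra.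
  - rewrite RInt_swapR by now apply ex_RInt_swap.
    rewrite Rabs_Ropp, (Rabs_left (b - a)), Ropp_minus_distr by lra.
    apply abs_RInt_le_const; [lra | now apply ex_RInt_swap |].
    intros; apply HM. rewrite Rmin_right, Rmax_left; lra.
Qed.

Lemma RInt_even (f : R -> R) b : (forall a b, ex_RInt f a b) -> (forall x, f (- x) = f x) ->
  RInt f (- b) b = 2 * RInt f 0 b.
Proof.
  intros Hf He.
  rewrite <- (RInt_ChaslesR f (- b) 0 b) by auto.
  rewrite (RInt_extR f (fun y => f (- y)) (- b) 0) by (intros; now rewrite He).
  rewrite RInt_comp_oppR, Ropp_involutive, Ropp_0, RInt_swapR by auto. as_R_eq; ring.
Qed.

Lemma RInt_odd (f : R -> R) b : (forall a b, ex_RInt f a b) -> (forall x, f (- x) = - f x) ->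
  RInt f (- b) b = 0.
Proof.
  intros Hf Ho.
  rewrite <- (RInt_ChaslesR f (- b) 0 b) by auto.
  rewrite (RInt_extR f (fun y => -1 * f (- y)) (- b) 0)
    by (intros x; rewrite Ho; ring).
  rewrite RInt_scalR by (apply ex_RInt_comp_oppR; auto).
  rewrite RInt_comp_oppR, Ropp_involutive, Ropp_0, RInt_swapR by auto. as_R_eq; ring.
Qed.

Lemma RInt_nested_abs_le (f h : R -> R) a b c d :
  (forall a b, ex_RInt f a b) -> (forall a b, ex_RInt h a b) ->
  (forall x, Rabs (f x) <= h x) -> c <= a -> a <= b -> b <= d ->
  Rabs (RInt f c d - RInt f a b) <= RInt h c d - RInt h a b.
Proof.
  intros Hf Hh Hfh Hca Hab Hbd.
  rewrite <- (RInt_ChaslesR f c a d), <- (RInt_ChaslesR f a b d) by auto.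
  rewrite <- (RInt_ChaslesR h c a d), <- (RInt_ChaslesR h a b d) by auto.
  replace (RInt f c a + (RInt f a b + RInt f b d) - RInt f a b)
    with (RInt f c a + RInt f b d) by ring.
  replace (RInt h c a + (RInt h a b + RInt h b d) - RInt h a b)
    with (RInt h c a + RInt h b d) by ring.
  eapply Rle_trans; [apply Rabs_triang|].
  apply Rplus_le_compat; apply RInt_abs_le; auto.
Qed.

Lemma is_derive_0_const (F : R -> R) x y : (forall z, is_derive F z 0) -> F x = F y.
Proof.
  intros DF. destruct (Rtotal_order x y) as [Hl|[He|Hg]].
  - apply (eq_is_derive F); [intros t _; exact (DF t) | lra].
  - now rewrite He.
  - symmetry; apply (eq_is_derive F); [intros t _; exact (DF t) | lra].
Qed.

(** * Improper integrals over the real line *)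

Definition is_RInt_line (f : R -> R) (L : R) : Prop :=
  (forall a b, ex_RInt f a b) /\
  (forall eps, 0 < eps -> exists M, forall a b, a <= - M -> M <= b -> Rabs (RInt f a b - L) < eps).

Lemma is_RInt_line_ext f g L : (forall x, f x = g x) -> is_RInt_line f L -> is_RInt_line g L.
Proof. now intros E; rewrite (functional_extensionality f g E). Qed.

Lemma is_RInt_line_scal f c L : is_RInt_line f L -> is_RInt_line (fun x => c * f x) (c * L).
Proof.
  intros [Hf HL]; split; [intros; now apply ex_RInt_scalR|].
  intros eps Heps.
  assert (Hc : 0 < Rabs c + 1) by (generalize (Rabs_pos c); lra).
  destruct (HL (eps / (Rabs c + 1))) as [M HM]; [now apply Rdiv_lt_0_compat|].
  exists M; intros a b Ha Hb. specialize (HM a b Ha Hb).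
  rewrite RInt_scalR by auto.
  replace (c * RInt f a b - c * L) with (c * (RInt f a b - L)) by ring.
  rewrite Rabs_mult.
  apply Rle_lt_trans with ((Rabs c + 1) * Rabs (RInt f a b - L)).
  - apply Rmult_le_compat_r; [apply Rabs_pos | lra].
  - apply Rmult_lt_reg_l with (/ (Rabs c + 1)); [now apply Rinv_0_lt_compat|].
    rewrite <- Rmult_assoc, Rinv_l, Rmult_1_l by lra. now rewrite Rmult_comm.
Qed.

Lemma is_RInt_line_plus f g Lf Lg : is_RInt_line f Lf -> is_RInt_line g Lg ->
  is_RInt_line (fun x => f x + g x) (Lf + Lg).
Proof.
  intros [Hf HLf] [Hg HLg]; split; [intros; now apply ex_RInt_plusR|].
  intros eps Heps.
  destruct (HLf (eps / 2)) as [M1 HM1]; [lra|].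
  destruct (HLg (eps / 2)) as [M2 HM2]; [lra|].
  exists (Rmax M1 M2); intros a b Ha Hb.
  generalize (Rmax_l M1 M2) (Rmax_r M1 M2); intros.
  specialize (HM1 a b ltac:(lra) ltac:(lra)); specialize (HM2 a b ltac:(lra) ltac:(lra)).
  rewrite RInt_plusR by auto.
  apply Rabs_def2 in HM1; apply Rabs_def2 in HM2; apply Rabs_def1; lra.
Qed.

Lemma is_RInt_line_minus f g Lf Lg : is_RInt_line f Lf -> is_RInt_line g Lg ->
  is_RInt_line (fun x => f x - g x) (Lf - Lg).
Proof.
  intros Hf Hg.
  apply is_RInt_line_ext with (fun x => f x + -1 * g x); [intros; ring|].
  replace (Lf - Lg) with (Lf + -1 * Lg) by ring.
  now apply is_RInt_line_plus, is_RInt_line_scal.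
Qed.

Lemma is_RInt_line_comp_lin f L al be : 0 < al -> is_RInt_line f L ->
  is_RInt_line (fun x => f (al * x + be)) (L / al).
Proof.
  intros Hal [Hf HL]; split; [intros; apply ex_RInt_comp_linR; auto; lra|].
  intros eps Heps.
  destruct (HL (eps * al)) as [M HM]; [nra|].
  exists ((Rabs M + Rabs be) / al); intros a b Ha Hb.
  generalize (Rle_abs M) (Rle_abs be) (Rle_abs (- be)); rewrite Rabs_Ropp; intros.
  apply Rmult_le_compat_l with (r := al) in Ha, Hb; try lra.
  replace (al * - ((Rabs M + Rabs be) / al)) with (- (Rabs M + Rabs be)) in Ha by (field; lra).
  replace (al * ((Rabs M + Rabs be) / al)) with (Rabs M + Rabs be) in Hb by (field; lra).
  specialize (HM (al * a + be) (al * b + be) ltac:(lra) ltac:(lra)).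
  rewrite RInt_comp_linR by (auto; lra).
  replace (/ al * RInt f (al * a + be) (al * b + be) - L / al)
    with (/ al * (RInt f (al * a + be) (al * b + be) - L)) by (field; lra).
  rewrite Rabs_mult, Rabs_inv, (Rabs_right al) by lra.
  apply Rmult_lt_reg_l with al; auto. rewrite <- Rmult_assoc, Rinv_r by lra. lra.
Qed.

Lemma is_RInt_line_sym_lim f L : is_RInt_line f L -> is_lim (fun K => RInt f (- K) K) p_infty L.
Proof.
  intros [_ HL]. apply is_lim_spec; intros eps.
  destruct (HL eps (cond_pos eps)) as [M HM].
  exists (Rabs M); intros K HK. generalize (Rle_abs M); intros. apply HM; lra.
Qed.

Lemma is_RInt_line_odd f L : (forall x, f (- x) = - f x) -> is_RInt_line f L -> L = 0.
Proof.
  intros Ho HL.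
  assert (Hlim := is_RInt_line_sym_lim f L HL).
  apply is_lim_ext with (g := fun _ => 0) in Hlim.
  - apply is_lim_unique in Hlim. rewrite Lim_const in Hlim. now injection Hlim.
  - intros K. apply RInt_odd; auto. apply HL.
Qed.

Lemma is_RInt_line_tail_le f h Lf Lh c a b :
  is_RInt_line f Lf -> is_RInt_line h Lh -> 0 <= c ->
  (forall x, Rabs (f x) <= c * h x) -> a <= b ->
  Rabs (Lf - RInt f a b) <= c * (Lh - RInt h a b).
Proof.
  intros HLf HLh Hc Hfh Hab.
  assert (Hf : is_lim (fun K => Rabs (RInt f (- K) K - RInt f a b)) p_infty
                 (Rabs (Lf - RInt f a b))).
  { apply (is_lim_Rabs _ _ (Lf - RInt f a b)), is_lim_minus';
      [now apply is_RInt_line_sym_lim | apply is_lim_const]. }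
  assert (Hh : is_lim (fun K => c * (RInt h (- K) K - RInt h a b)) p_infty
                 (c * (Lh - RInt h a b))).
  { apply (is_lim_scal_l _ c _ (Lh - RInt h a b)), is_lim_minus';
      [now apply is_RInt_line_sym_lim | apply is_lim_const]. }
  refine (is_lim_le_loc _ _ _ _ _ _ Hf Hh).
  exists (Rmax (Rabs a) (Rabs b)); intros K HK.
  generalize (Rmax_l (Rabs a) (Rabs b)) (Rmax_r (Rabs a) (Rabs b)); intros.
  apply Rabs_le_between in H; apply Rabs_le_between in H0.
  rewrite Rmult_minus_distr_l, <- !RInt_scalR by apply HLh.
  apply RInt_nested_abs_le; try lra; try apply HLf; auto.
  intros; apply ex_RInt_scalR, HLh.
Qed.

Lemma is_RInt_line_RInt_le h I a b : (forall x, 0 <= h x) -> is_RInt_line h I -> a <= b ->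
  RInt h a b <= I.
Proof.
  intros Hh HI Hab.
  assert (T := is_RInt_line_tail_le h h I I 1 a b HI HI ltac:(lra)
                 ltac:(intros; rewrite Rabs_right by (apply Rle_ge; auto); lra) Hab).
  apply Rabs_le_between in T; lra.
Qed.

Section Dominated.
Variables f h : R -> R.
Variable Lh : R.
Hypothesis Hf : forall a b, ex_RInt f a b.
Hypothesis Hfh : forall x, Rabs (f x) <= h x.
Hypothesis HLh : is_RInt_line h Lh.

Lemma RInt_dominated_cauchy eps : 0 < eps -> exists M, 0 <= M /\
  forall a b, a <= - M -> M <= b -> Rabs (RInt f a b - RInt f (- M) M) < eps.
Proof.
  intros Heps. destruct (proj2 HLh (eps / 2)) as [M HM]; [lra|].
  exists (Rabs M); split; [apply Rabs_pos|]; intros a b Ha Hb.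
  generalize (Rle_abs M) (Rabs_pos M); intros.
  eapply Rle_lt_trans; [apply (RInt_nested_abs_le f h); auto; try apply HLh; lra|].
  generalize (HM a b ltac:(lra) ltac:(lra)) (HM (- Rabs M) (Rabs M) ltac:(lra) ltac:(lra)).
  intros A B; apply Rabs_def2 in A; apply Rabs_def2 in B; lra.
Qed.

Lemma is_RInt_line_dominated : exists L, is_RInt_line f L.
Proof.
  set (S n := RInt f (- INR n) (INR n)).
  assert (HS : Cauchy_crit S).
  { intros eps Heps.
    destruct (RInt_dominated_cauchy (eps / 2)) as [M [HM0 HM]]; [lra|].
    destruct (INR_unbounded M) as [N HN].
    exists N; intros n m Hn Hm. apply le_INR in Hn, Hm.
    unfold Rdist, S.
    generalize (HM (- INR n) (INR n) ltac:(lra) ltac:(lra))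
               (HM (- INR m) (INR m) ltac:(lra) ltac:(lra)).
    intros A B; apply Rabs_def2 in A; apply Rabs_def2 in B; apply Rabs_def1; lra. }
  destruct (Rcomplete.R_complete S HS) as [L HL].
  exists L; split; [exact Hf|]; intros eps Heps.
  destruct (RInt_dominated_cauchy (eps / 3)) as [M [HM0 HM]]; [lra|].
  destruct (HL (eps / 3)) as [N HN]; [lra|].
  destruct (INR_unbounded (Rmax M (INR N))) as [n Hn].
  generalize (Rmax_l M (INR N)) (Rmax_r M (INR N)); intros.
  specialize (HN n ltac:(apply INR_le; lra)). unfold Rdist, S in HN.
  exists M; intros a b Ha Hb.
  generalize (HM a b Ha Hb) (HM (- INR n) (INR n) ltac:(lra) ltac:(lra)).
  intros A B; apply Rabs_def2 in A; apply Rabs_def2 in B; apply Rabs_def2 in HN.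
  apply Rabs_def1; lra.
Qed.

End Dominated.

(** * Continuity in two variables *)

Lemma continuity_2d_pt_continuous_l f x y :
  continuity_2d_pt f x y -> continuous (fun x => f x y) x.
Proof.
  intros H. apply continuity_pt_filterlim; intros eps Heps.
  destruct (H (mkposreal eps Heps)) as [d Hd].
  exists d; split; [apply cond_pos|]; intros z [_ Hz]; simpl in *; unfold Rdist in *.
  apply Hd; auto. rewrite Rminus_diag, Rabs_R0; apply cond_pos.
Qed.

Lemma continuity_2d_pt_continuous_r f x y :
  continuity_2d_pt f x y -> continuous (fun y => f x y) y.
Proof.
  intros H. apply continuity_pt_filterlim; intros eps Heps.
  destruct (H (mkposreal eps Heps)) as [d Hd].
  exists d; split; [apply cond_pos|]; intros z [_ Hz]; simpl in *; unfold Rdist in *.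
  apply Hd; auto. rewrite Rminus_diag, Rabs_R0; apply cond_pos.
Qed.

Lemma continuity_2d_pt_swap f x y :
  continuity_2d_pt f x y -> continuity_2d_pt (fun u v => f v u) y x.
Proof. intros H eps. destruct (H eps) as [d Hd]. exists d. intros u v Hu Hv. now apply Hd. Qed.

Lemma continuity_2d_pt_exp f x y :
  continuity_2d_pt f x y -> continuity_2d_pt (fun u v => exp (f u v)) x y.
Proof.
  intros H. apply continuity_1d_2d_pt_comp; auto.
  apply derivable_continuous_pt, derivable_pt_exp.
Qed.

Lemma continuity_2d_pt_cos f x y :
  continuity_2d_pt f x y -> continuity_2d_pt (fun u v => cos (f u v)) x y.
Proof.
  intros H. apply continuity_1d_2d_pt_comp; auto.
  apply derivable_continuous_pt, derivable_pt_cos.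
Qed.

Lemma continuity_2d_pt_sin f x y :
  continuity_2d_pt f x y -> continuity_2d_pt (fun u v => sin (f u v)) x y.
Proof.
  intros H. apply continuity_1d_2d_pt_comp; auto.
  apply derivable_continuous_pt, derivable_pt_sin.
Qed.

Lemma continuity_2d_pt_pow f n x y :
  continuity_2d_pt f x y -> continuity_2d_pt (fun u v => f u v ^ n) x y.
Proof.
  intros H; induction n as [|n IH]; simpl.
  - apply continuity_2d_pt_const.
  - now apply continuity_2d_pt_mult.
Qed.

Lemma continuity_2d_pt_div f g x y :
  continuity_2d_pt f x y -> continuity_2d_pt g x y -> g x y <> 0 ->
  continuity_2d_pt (fun u v => f u v / g u v) x y.
Proof.
  intros Hf Hg Hn. apply continuity_2d_pt_mult; auto. now apply continuity_2d_pt_inv.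
Qed.

Ltac continuity_2d := repeat first
  [ apply continuity_2d_pt_exp | apply continuity_2d_pt_cos | apply continuity_2d_pt_sin
  | apply continuity_2d_pt_plus | apply continuity_2d_pt_minus | apply continuity_2d_pt_mult
  | apply continuity_2d_pt_opp | apply continuity_2d_pt_pow | apply continuity_2d_pt_div
  | apply continuity_2d_pt_id1 | apply continuity_2d_pt_id2 | apply continuity_2d_pt_const ].

(** * Contour shifts *)

Lemma is_lim_0_of_bound (f : R -> R) C :
  (forall b, 1 <= b -> Rabs (f b) <= C / b) -> is_lim f p_infty 0.
Proof.
  intros Hb. apply is_lim_spec; intros eps.
  assert (He := cond_pos eps). assert (HC := Rabs_pos C).
  exists (1 + Rabs C / eps); intros b Hlt.
  assert (Hq : 0 <= Rabs C / eps) by (apply Rdiv_le_0_compat; lra).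
  assert (HCb : Rabs C < eps * b).
  { apply Rmult_lt_compat_l with (r := eps) in Hlt; [|lra].
    replace (eps * (1 + Rabs C / eps)) with (eps + Rabs C) in Hlt by (field; lra). lra. }
  rewrite Rminus_0_r. eapply Rle_lt_trans; [apply Hb; lra|].
  apply Rle_lt_trans with (Rabs C / b).
  - apply Rmult_le_compat_r; [left; apply Rinv_0_lt_compat; lra | apply Rle_abs].
  - apply Rmult_lt_reg_r with b; [lra|]. unfold Rdiv.
    rewrite Rmult_assoc, Rinv_l, Rmult_1_r by lra. lra.
Qed.

Section Contour.
Variables P Q Ps Qs : R -> R -> R.
(* Cauchy-Riemann: [P + iQ] is holomorphic in [k + it], so [contour] is Cauchy's theorem for
   [exp (P + iQ)] on the rectangle [a, b] x [0, s]. *)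
Hypothesis HPs : forall k t, is_derive (fun t => P k t) t (Ps k t).
Hypothesis HQs : forall k t, is_derive (fun t => Q k t) t (Qs k t).
Hypothesis HPk : forall k t, is_derive (fun k => P k t) k (Qs k t).
Hypothesis HQk : forall k t, is_derive (fun k => Q k t) k (- Ps k t).
Hypothesis CP : forall k t, continuity_2d_pt P k t.
Hypothesis CQ : forall k t, continuity_2d_pt Q k t.
Hypothesis CPs : forall k t, continuity_2d_pt Ps k t.
Hypothesis CQs : forall k t, continuity_2d_pt Qs k t.

Let u k t := exp (P k t) * cos (Q k t).
Let v k t := exp (P k t) * sin (Q k t).
Let U k t := exp (P k t) * (Ps k t * cos (Q k t) - Qs k t * sin (Q k t)).

Let continuity_u : forall k t, continuity_2d_pt u k t.
Proof. intros; unfold u; continuity_2d; auto. Qed.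
Let continuity_v : forall k t, continuity_2d_pt v k t.
Proof. intros; unfold v; continuity_2d; auto. Qed.
Let continuity_U : forall k t, continuity_2d_pt U k t.
Proof. intros; unfold U; continuity_2d; auto. Qed.

Let is_derive_u : forall k t, is_derive (fun t => u k t) t (U k t).
Proof.
  intros k t. unfold u, U.
  evar (d : R). replace (exp (P k t) * (Ps k t * cos (Q k t) - Qs k t * sin (Q k t))) with d.
  - apply (is_derive_mult (fun t => exp (P k t)) (fun t => cos (Q k t))).
    + apply (is_derive_comp exp (fun t => P k t)); [apply is_derive_exp | apply HPs].
    + apply (is_derive_comp cos (fun t => Q k t)); [apply is_derive_cos | apply HQs].
    + intros; apply Rmult_comm.
  - unfold d; simpl; unfold scal, mult, plus; simpl; unfold mult; simpl; ring.
Qed.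

Let is_derive_neg_v : forall k t, is_derive (fun k => - v k t) k (U k t).
Proof.
  intros k t. unfold v, U.
  evar (d : R). replace (exp (P k t) * (Ps k t * cos (Q k t) - Qs k t * sin (Q k t))) with d.
  - apply (is_derive_opp (fun k => exp (P k t) * sin (Q k t))).
    apply (is_derive_mult (fun k => exp (P k t)) (fun k => sin (Q k t))).
    + apply (is_derive_comp exp (fun k => P k t)); [apply is_derive_exp | apply HPk].
    + apply (is_derive_comp sin (fun k => Q k t)); [apply is_derive_sin | apply HQk].
    + intros; apply Rmult_comm.
  - unfold d; simpl; unfold scal, mult, plus, opp; simpl; unfold mult; simpl; ring.
Qed.

Let continuous_v_diff a b t : continuous (fun t => v b t - v a t) t.
Proof.
  apply (continuous_minus (fun t => v b t) (fun t => v a t));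
    apply continuity_2d_pt_continuous_r, continuity_v.
Qed.

Let is_derive_RInt_u a b s :
  is_derive (fun s => RInt (fun k => u k s) a b) s (RInt (fun k => U k s) a b).
Proof.
  rewrite (RInt_extR _ (fun t => Derive (fun z => u t z) s))
    by (intros; symmetry; apply is_derive_unique; auto).
  apply (is_derive_RInt_param (fun s k => u k s)).
  - apply filter_forall; intros; eexists; apply is_derive_u.
  - intros t _. apply continuity_2d_pt_ext with (fun s t => U t s).
    + intros; symmetry; apply is_derive_unique; auto.
    + apply continuity_2d_pt_swap; auto.
  - apply filter_forall; intros; apply ex_RInt_continuousR; intros.
    apply continuity_2d_pt_continuous_l, continuity_u.
Qed.

Lemma contour a b s :
  RInt (fun k => u k s) a b - RInt (fun k => u k 0) a b =
  - RInt (fun t => v b t - v a t) 0 s.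
Proof.
  set (w t := v b t - v a t).
  set (H s := RInt (fun k => u k s) a b + RInt w 0 s).
  assert (DH : forall s, is_derive H s 0).
  { intros s0.
    assert (D2 : is_derive (fun s => RInt w 0 s) s0 (w s0)).
    { apply (is_derive_RInt w (RInt w 0) 0); [|apply continuous_v_diff].
      apply filter_forall; intros; apply (RInt_correct (V := R_CompleteNormedModule)).
      apply ex_RInt_continuousR, continuous_v_diff. }
    assert (E : RInt (fun k => U k s0) a b + w s0 = 0).
    { rewrite (is_RInt_unique _ _ _ _ (is_RInt_derive (fun k => - v k s0) (fun k => U k s0) a b
                 (fun k _ => is_derive_neg_v k s0)
                 (fun k _ => continuity_2d_pt_continuous_l _ _ _ (continuity_U k s0)))).
      unfold w, minus, plus, opp; simpl; ring. }
    assert (D := is_derive_plus _ _ _ _ _ (is_derive_RInt_u a b s0) D2).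
    unfold plus in D; simpl in D. now rewrite E in D. }
  assert (HH := is_derive_0_const H s 0 DH).
  unfold H in HH. rewrite RInt_point in HH. unfold zero in HH; simpl in HH.
  fold w; lra.
Qed.

Lemma contour_sym_lim s L :
  is_RInt_line (fun k => u k s) L ->
  is_lim (fun b => RInt (fun t => v b t - v (- b) t) 0 s) p_infty 0 ->
  is_lim (fun b => RInt (fun k => u k 0) (- b) b) p_infty L.
Proof.
  intros HL Hv.
  apply is_lim_ext with
    (fun b => RInt (fun k => u k s) (- b) b + RInt (fun t => v b t - v (- b) t) 0 s).
  - intros b; generalize (contour (- b) b s); lra.
  - rewrite <- (Rplus_0_r L). apply is_lim_plus'; auto. now apply is_RInt_line_sym_lim.
Qed.

End Contour.

(** * The Gaussian integral *)

Lemma exp_le_mono x y : x <= y -> exp x <= exp y.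
Proof. intros [H|H]; [now apply Rlt_le, exp_increasing | subst; lra]. Qed.

Lemma exp_neg_le_inv x : 0 < x -> exp (- x) <= / x.
Proof.
  intros Hx. generalize (exp_ineq1_le x) (exp_pos x); intros.
  rewrite exp_Ropp. apply Rinv_le_contravar; lra.
Qed.

Lemma exp_neg_sq_le_inv b : 1 <= b -> exp (- (b * b)) <= / b.
Proof.
  intros Hb. eapply Rle_trans; [apply exp_neg_le_inv; nra|].
  apply Rinv_le_contravar; nra.
Qed.

Lemma Rabs_cos_le_1 x : Rabs (cos x) <= 1.
Proof. destruct (COS_bound x). apply Rabs_le; lra. Qed.

Lemma Rabs_sin_le_1 x : Rabs (sin x) <= 1.
Proof. destruct (SIN_bound x). apply Rabs_le; lra. Qed.

Lemma one_plus_sq_pos t : 0 < 1 + t * t.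
Proof. nra. Qed.

Definition gauss (t : R) := exp (- (t * t)).
Definition gauss_int (x : R) := RInt gauss 0 x.

(* With [gauss_int x ^ 2 + gauss_aux x] constant, equal to [atan 1 = PI / 4] at [x = 0], and
   [gauss_aux x <= exp (- x ^ 2)], one gets [gauss_int x -> sqrt PI / 2]. *)
Definition gauss_aux (x : R) := RInt (fun t => exp (- (x * x) * (1 + t * t)) / (1 + t * t)) 0 1.

Lemma gauss_pos t : 0 < gauss t.
Proof. apply exp_pos. Qed.

Lemma continuous_gauss x : continuous gauss x.
Proof. apply ex_derive_continuousR. unfold gauss. auto_derive. auto. Qed.

Lemma ex_RInt_gauss a b : ex_RInt gauss a b.
Proof. apply ex_RInt_continuousR, continuous_gauss. Qed.

Lemma is_derive_gauss_int x : is_derive gauss_int x (gauss x).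
Proof.
  apply (is_derive_RInt gauss gauss_int 0); [|apply continuous_gauss].
  apply filter_forall; intros; apply (RInt_correct (V := R_CompleteNormedModule)), ex_RInt_gauss.
Qed.

Lemma is_derive_gauss_aux x : is_derive gauss_aux x (- 2 * gauss x * gauss_int x).
Proof.
  unfold gauss_aux.
  set (f := fun x t => exp (- (x * x) * (1 + t * t)) / (1 + t * t)).
  set (df := fun x t => - 2 * x * exp (- (x * x) * (1 + t * t))).
  assert (Df : forall x t, is_derive (fun x => f x t) x (df x t)).
  { intros y t. unfold f, df. auto_derive; [generalize (one_plus_sq_pos t); lra|].
    field. generalize (one_plus_sq_pos t); lra. }
  replace (- 2 * gauss x * gauss_int x) with (RInt (fun t => Derive (fun u => f u t) x) 0 1).
  - apply (is_derive_RInt_param f 0 1 x).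
    + apply filter_forall; intros; eexists; apply Df.
    + intros t _. apply continuity_2d_pt_ext with df.
      * intros; symmetry; now apply is_derive_unique.
      * unfold df; continuity_2d.
    + apply filter_forall; intros y. apply ex_RInt_continuousR; intros z.
      apply ex_derive_continuousR. unfold f. auto_derive. generalize (one_plus_sq_pos z); lra.
  - rewrite (RInt_extR _ (fun t => (- 2 * gauss x) * (x * gauss (x * t + 0)))).
    + rewrite RInt_scalR.
      * unfold gauss_int. f_equal.
        transitivity (RInt gauss (x * 0 + 0) (x * 1 + 0)); [|f_equal; ring].
        rewrite <- (RInt_comp_lin gauss x 0 0 1) by apply ex_RInt_gauss.
        now apply RInt_extR.
      * apply ex_RInt_continuousR; intros; apply ex_derive_continuousR.
        unfold gauss; auto_derive; auto.
    + intros t. replace (Derive (fun u => f u t) x) with (df x t)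
        by (symmetry; apply is_derive_unique, Df).
      unfold df, gauss.
      replace (- (x * x) * (1 + t * t)) with (- (x * x) + - ((x * t + 0) * (x * t + 0))) by ring.
      rewrite exp_plus; ring.
Qed.

Lemma gauss_int_sq_plus_aux x : gauss_int x * gauss_int x + gauss_aux x = PI / 4.
Proof.
  assert (D : forall y, is_derive (fun y => gauss_int y * gauss_int y + gauss_aux y) y 0).
  { intros y.
    assert (D := is_derive_plus _ _ _ _ _
                   (is_derive_mult _ _ y _ _ (is_derive_gauss_int y) (is_derive_gauss_int y)
                      ltac:(intros; apply Rmult_comm))
                   (is_derive_gauss_aux y)).
    unfold plus, mult in D; simpl in D; unfold plus, mult in D; simpl in D.
    replace 0 with (gauss y * gauss_int y + gauss_int y * gauss y + -2 * gauss y * gauss_int y)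
      by ring.
    exact D. }
  assert (H0 : gauss_int 0 * gauss_int 0 + gauss_aux 0 = PI / 4).
  { unfold gauss_int, gauss_aux. rewrite RInt_point. unfold zero; simpl.
    rewrite (RInt_extR _ (fun t => / (1 + t * t))).
    - rewrite (is_RInt_unique _ _ _ _ (is_RInt_derive atan (fun t => / (1 + t * t)) 0 1
                 (fun t _ => is_derive_atan t)
                 ltac:(intros t _; apply ex_derive_continuousR; auto_derive;
                       generalize (one_plus_sq_pos t); lra))).
      unfold minus, plus, opp; simpl. rewrite atan_1, atan_0. ring.
    - intros t. rewrite Rmult_0_l, Ropp_0, Rmult_0_l, exp_0.
      field. generalize (one_plus_sq_pos t); lra. }
  rewrite <- H0. exact (is_derive_0_const _ x 0 D).
Qed.

Lemma gauss_aux_bound x : 0 <= gauss_aux x <= exp (- (x * x)).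
Proof.
  assert (Ex : ex_RInt (fun t => exp (- (x * x) * (1 + t * t)) / (1 + t * t)) 0 1).
  { apply ex_RInt_continuousR; intros z; apply ex_derive_continuousR; auto_derive.
    generalize (one_plus_sq_pos z); lra. }
  unfold gauss_aux; split.
  - apply RInt_ge0; [lra | exact Ex|].
    intros t _. apply Rlt_le, Rdiv_lt_0_compat; [apply exp_pos | apply one_plus_sq_pos].
  - apply Rle_trans with (RInt (fun _ => exp (- (x * x))) 0 1);
      [| rewrite RInt_constR; lra].
    apply RInt_le; [lra | exact Ex | apply ex_RInt_const|].
    intros t Ht. assert (0 <= t * t) by nra. assert (0 <= x * x) by nra.
    apply Rle_trans with (exp (- (x * x) * (1 + t * t))); [|apply exp_le_mono; nra].
    unfold Rdiv. rewrite <- (Rmult_1_r (exp _)) at 2.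
    apply Rmult_le_compat_l; [apply Rlt_le, exp_pos|].
    rewrite <- Rinv_1. apply Rinv_le_contravar; lra.
Qed.

Lemma gauss_int_opp x : gauss_int (- x) = - gauss_int x.
Proof.
  unfold gauss_int.
  rewrite (RInt_extR gauss (fun y => gauss (- y))) by (intros; unfold gauss; f_equal; ring).
  rewrite RInt_comp_oppR by apply ex_RInt_gauss. rewrite Ropp_0, Ropp_involutive.
  rewrite RInt_swapR by apply ex_RInt_gauss. as_R_eq; ring.
Qed.

Lemma gauss_int_ge0 x : 0 <= x -> 0 <= gauss_int x.
Proof.
  intros; apply RInt_ge0; auto; [apply ex_RInt_gauss|].
  intros; apply Rlt_le, gauss_pos.
Qed.

Lemma gauss_int_dist_le x : 0 <= x ->
  Rabs (gauss_int x - sqrt PI / 2) <= 2 / sqrt PI * exp (- (x * x)).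
Proof.
  intros Hx.
  assert (HP : 0 < sqrt PI) by (apply sqrt_lt_R0, PI_RGT_0).
  assert (Hs : sqrt PI * sqrt PI = PI) by (apply sqrt_sqrt; generalize PI_RGT_0; lra).
  generalize (gauss_int_sq_plus_aux x) (gauss_aux_bound x) (gauss_int_ge0 x Hx); intros E B P.
  assert (Hq : 0 < gauss_int x + sqrt PI / 2) by lra.
  assert (F : - gauss_aux x = (gauss_int x - sqrt PI / 2) * (gauss_int x + sqrt PI / 2))
    by nra.
  replace (gauss_int x - sqrt PI / 2) with (- gauss_aux x / (gauss_int x + sqrt PI / 2))
    by (rewrite F; field; lra).
  unfold Rdiv. rewrite Rabs_mult, Rabs_Ropp, Rabs_inv, (Rabs_right (gauss_aux x)),
    (Rabs_right (_ + _)) by lra.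
  apply Rle_trans with (exp (- (x * x)) * / (sqrt PI / 2)); [|right; field; lra].
  apply Rmult_le_compat; try lra; [apply Rlt_le, Rinv_0_lt_compat; lra|].
  apply Rinv_le_contravar; lra.
Qed.

Lemma is_lim_gauss_int : is_lim gauss_int p_infty (sqrt PI / 2).
Proof.
  apply is_lim_ext with (fun x => (gauss_int x - sqrt PI / 2) + sqrt PI / 2); [intros; ring|].
  replace (Finite (sqrt PI / 2)) with (Finite (0 + sqrt PI / 2)) by (f_equal; ring).
  apply is_lim_plus'; [|apply is_lim_const].
  apply (is_lim_0_of_bound _ (2 / sqrt PI)); intros b Hb.
  assert (HP : 0 < sqrt PI) by (apply sqrt_lt_R0, PI_RGT_0).
  eapply Rle_trans; [apply gauss_int_dist_le; lra|].
  apply Rmult_le_compat_l; [left; apply Rdiv_lt_0_compat; lra | now apply exp_neg_sq_le_inv].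
Qed.

Lemma is_RInt_line_gauss : is_RInt_line gauss (sqrt PI).
Proof.
  split; [apply ex_RInt_gauss|]; intros eps He.
  destruct (proj2 (is_lim_spec _ _ _) is_lim_gauss_int (mkposreal (eps / 2) ltac:(lra)))
    as [M HM]; simpl in HM.
  exists (M + 1); intros a b Ha Hb.
  rewrite <- (RInt_ChaslesR gauss a 0 b), RInt_swapR by apply ex_RInt_gauss.
  change (Rabs (- gauss_int a + gauss_int b - sqrt PI) < eps).
  rewrite <- (Ropp_involutive a), gauss_int_opp, Ropp_involutive.
  generalize (HM (- a) ltac:(lra)) (HM b ltac:(lra)); intros A B.
  apply Rabs_def2 in A; apply Rabs_def2 in B; apply Rabs_def1; lra.
Qed.

Lemma is_RInt_line_gauss_scaled s : 0 < s ->
  is_RInt_line (fun k => exp (- (s * (k * k)))) (sqrt PI / sqrt s).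
Proof.
  intros Hs. apply is_RInt_line_ext with (fun k => gauss (sqrt s * k + 0)).
  - intros k. unfold gauss. do 2 f_equal.
    replace ((sqrt s * k + 0) * (sqrt s * k + 0)) with ((sqrt s * sqrt s) * (k * k)) by ring.
    rewrite sqrt_sqrt; lra.
  - apply is_RInt_line_comp_lin, is_RInt_line_gauss. now apply sqrt_lt_R0.
Qed.

(** * Gaussian transforms and the heat kernel *)

(* [neg_sq_re k t + i neg_sq_im k t = - (k + i t) ^ 2]. *)
Definition neg_sq_re (k t : R) := t * t - k * k.
Definition neg_sq_im (k t : R) := - (2 * k * t).

Lemma neg_sq_vertical_lim s :
  is_lim (fun b => RInt (fun t => exp (neg_sq_re b t) * sin (neg_sq_im b t)
                             - exp (neg_sq_re (- b) t) * sin (neg_sq_im (- b) t)) 0 s) p_infty 0.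
Proof.
  apply (is_lim_0_of_bound _ (Rabs s * (2 * exp (s * s)))); intros b Hb.
  eapply Rle_trans; [apply RInt_abs_le_const with (M := 2 * exp (s * s) * exp (- (b * b)))|].
  - apply ex_RInt_continuousR; intros; apply ex_derive_continuousR.
    unfold neg_sq_re, neg_sq_im; auto_derive; auto.
  - intros t Ht.
    assert (Htt : t * t <= s * s).
    { destruct (Rle_dec 0 s).
      - rewrite Rmin_left, Rmax_right in Ht by lra; nra.
      - rewrite Rmin_right, Rmax_left in Ht by lra; nra. }
    assert (K : forall c, Rabs (exp (neg_sq_re c t) * sin (neg_sq_im c t))
                          <= exp (s * s) * exp (- (c * c))).
    { intros c. rewrite Rabs_mult, Rabs_right, <- exp_plus by (apply Rle_ge, Rlt_le, exp_pos).
      rewrite <- (Rmult_1_r (exp (s * s + - (c * c)))).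
      apply Rmult_le_compat; [apply Rlt_le, exp_pos | apply Rabs_pos | | apply Rabs_sin_le_1].
      apply exp_le_mono; unfold neg_sq_re; lra. }
    unfold Rminus at 1. eapply Rle_trans; [apply Rabs_triang|]. rewrite Rabs_Ropp.
    generalize (K b) (K (- b)). replace (- b * - b) with (b * b) by ring. lra.
  - rewrite Rminus_0_r. unfold Rdiv; rewrite !Rmult_assoc.
    apply Rmult_le_compat_l; [apply Rabs_pos|].
    apply Rmult_le_compat_l; [lra|].
    apply Rmult_le_compat_l; [apply Rlt_le, exp_pos | now apply exp_neg_sq_le_inv].
Qed.

Lemma neg_sq_contour_sym_lim s L :
  is_RInt_line (fun k => exp (neg_sq_re k s) * cos (neg_sq_im k s)) L ->
  is_lim (fun b => RInt gauss (- b) b) p_infty L.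
Proof.
  intros HL.
  assert (H := contour_sym_lim neg_sq_re neg_sq_im (fun k t => 2 * t) (fun k t => - (2 * k))
    ltac:(intros; unfold neg_sq_re; auto_derive; auto; ring)
    ltac:(intros; unfold neg_sq_im; auto_derive; auto; ring)
    ltac:(intros; unfold neg_sq_re; auto_derive; auto; ring)
    ltac:(intros; unfold neg_sq_im; auto_derive; auto; ring)
    ltac:(intros; unfold neg_sq_re; continuity_2d) ltac:(intros; unfold neg_sq_im; continuity_2d)
    ltac:(intros; continuity_2d) ltac:(intros; continuity_2d) s L HL (neg_sq_vertical_lim s)).
  refine (is_lim_ext _ _ _ _ _ H).
  intros b; apply RInt_extR; intros k; unfold gauss, neg_sq_re, neg_sq_im.
  replace (- (2 * k * 0)) with 0 by ring. rewrite cos_0, Rmult_1_r. f_equal; ring.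
Qed.

Lemma is_RInt_line_gauss_cos s :
  is_RInt_line (fun k => gauss k * cos (2 * s * k)) (sqrt PI * exp (- (s * s))).
Proof.
  set (u k := exp (neg_sq_re k s) * cos (neg_sq_im k s)).
  assert (Eu : forall k, u k = exp (s * s) * (gauss k * cos (2 * s * k))).
  { intros k; unfold u, neg_sq_re, neg_sq_im, gauss.
    replace (s * s - k * k) with (s * s + - (k * k)) by ring.
    replace (- (2 * k * s)) with (- (2 * s * k)) by ring.
    rewrite exp_plus, cos_neg; ring. }
  destruct (is_RInt_line_dominated u (fun k => exp (s * s) * gauss k) (exp (s * s) * sqrt PI))
    as [L HL].
  - intros; apply ex_RInt_continuousR; intros k.
    apply ex_derive_continuousR; unfold u, neg_sq_re, neg_sq_im; auto_derive; auto.
  - intros k. rewrite Eu, !Rabs_mult, Rabs_right, (Rabs_right (gauss k))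
      by (apply Rle_ge, Rlt_le, exp_pos).
    rewrite <- (Rmult_1_r (gauss k)) at 2.
    apply Rmult_le_compat_l; [apply Rlt_le, exp_pos|].
    apply Rmult_le_compat_l; [apply Rlt_le, gauss_pos | apply Rabs_cos_le_1].
  - apply is_RInt_line_scal, is_RInt_line_gauss.
  - assert (HL0 : L = sqrt PI).
    { assert (H1 := is_lim_unique _ _ _ (neg_sq_contour_sym_lim s L HL)).
      rewrite (is_lim_unique _ _ _ (is_RInt_line_sym_lim _ _ is_RInt_line_gauss)) in H1.
      now injection H1. }
    subst L.
    apply is_RInt_line_ext with (fun k => exp (- (s * s)) * u k).
    + intros k. rewrite Eu, <- Rmult_assoc, <- exp_plus.
      replace (- (s * s) + s * s) with 0 by ring. rewrite exp_0; ring.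
    + replace (sqrt PI * exp (- (s * s))) with (exp (- (s * s)) * sqrt PI) by ring.
      now apply is_RInt_line_scal.
Qed.

Lemma is_RInt_line_gauss_cos_affine lam th :
  is_RInt_line (fun z => gauss z * cos (lam * z + th)) (sqrt PI * exp (- (lam * lam) / 4) * cos th).
Proof.
  destruct (is_RInt_line_dominated (fun z => gauss z * sin (lam * z)) gauss (sqrt PI))
    as [Ls HLs].
  - intros; apply ex_RInt_continuousR; intros; apply ex_derive_continuousR.
    unfold gauss; auto_derive; auto.
  - intros z. rewrite Rabs_mult, (Rabs_right (gauss z)) by (apply Rle_ge, Rlt_le, gauss_pos).
    rewrite <- (Rmult_1_r (gauss z)) at 2.
    apply Rmult_le_compat_l; [apply Rlt_le, gauss_pos | apply Rabs_sin_le_1].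
  - apply is_RInt_line_gauss.
  - replace Ls with 0 in HLs.
    2: { symmetry; refine (is_RInt_line_odd _ Ls _ HLs); intros x; unfold gauss.
         replace (- x * - x) with (x * x) by ring. replace (lam * - x) with (- (lam * x)) by ring.
         rewrite sin_neg; ring. }
    apply is_RInt_line_ext with
      (fun z => cos th * (gauss z * cos (2 * (lam / 2) * z)) - sin th * (gauss z * sin (lam * z))).
    + intros z. rewrite cos_plus. replace (2 * (lam / 2) * z) with (lam * z) by field. ring.
    + replace (sqrt PI * exp (- (lam * lam) / 4) * cos th) with
        (cos th * (sqrt PI * exp (- (lam / 2 * (lam / 2)))) - sin th * 0).
      * apply is_RInt_line_minus; apply is_RInt_line_scal; auto. apply is_RInt_line_gauss_cos.
      * replace (- (lam / 2 * (lam / 2))) with (- (lam * lam) / 4) by field. ring.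
Qed.

Lemma phi_heat_pos s x y : 0 < s -> 0 < phi_heat s x y.
Proof.
  intros Hs. unfold phi_heat. apply Rmult_lt_0_compat; [|apply exp_pos].
  apply Rinv_0_lt_compat, sqrt_lt_R0. generalize PI_RGT_0; nra.
Qed.

Lemma sqrt_4_PI_mult s : 0 < s -> sqrt (4 * PI * s) = 2 * sqrt PI * sqrt s.
Proof.
  intros Hs. rewrite sqrt_mult, sqrt_mult; try lra; try (generalize PI_RGT_0; lra).
  replace 4 with (2 * 2) by ring. now rewrite sqrt_square by lra.
Qed.

(* The heat semigroup acting on [exp (c x + i (kap x + be))]: substitute
   [x = y + 2 s c + 2 sqrt s z] and use [is_RInt_line_gauss_cos_affine]. *)
Lemma is_RInt_line_heat_exp_cos c kap be y s : 0 < s ->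
  is_RInt_line (fun x => exp (c * x) * cos (kap * x + be) * phi_heat s x y)
    (exp (c * y + s * (c * c - kap * kap)) * cos (kap * y + be + 2 * s * c * kap)).
Proof.
  intros Hs.
  assert (Sq := sqrt_4_PI_mult s Hs).
  set (r := sqrt s) in Sq.
  assert (Hr : 0 < r) by (apply sqrt_lt_R0; auto).
  assert (Er : r * r = s) by (apply sqrt_sqrt; lra).
  clearbody r.
  assert (HP : 0 < sqrt PI) by (apply sqrt_lt_R0, PI_RGT_0).
  set (lam := 2 * kap * r). set (th := kap * y + 2 * s * c * kap + be).
  set (K := exp (c * y + s * c * c) / (2 * sqrt PI * r)).
  assert (H := is_RInt_line_scal _ K _
                 (is_RInt_line_comp_lin _ _ (/ (2 * r)) (- (y + 2 * s * c) / (2 * r))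
                    ltac:(apply Rinv_0_lt_compat; lra) (is_RInt_line_gauss_cos_affine lam th))).
  eapply is_RInt_line_ext in H.
  - replace (exp (c * y + s * (c * c - kap * kap)) * cos (kap * y + be + 2 * s * c * kap)) with
      (K * (sqrt PI * exp (- (lam * lam) / 4) * cos th / / (2 * r))); [exact H|].
    unfold K, lam, th.
    replace (kap * y + be + 2 * s * c * kap) with (kap * y + 2 * s * c * kap + be) by ring.
    replace (c * y + s * (c * c - kap * kap))
      with ((c * y + s * c * c) + - (2 * kap * r * (2 * kap * r)) / 4) by (rewrite <- Er; field).
    rewrite (exp_plus (c * y + s * c * c)). field. lra.
  - intros x; simpl. unfold phi_heat. rewrite Sq.
    unfold K, gauss, lam, th.
    set (z := / (2 * r) * x + - (y + 2 * s * c) / (2 * r)).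
    replace (2 * kap * r * z + (kap * y + 2 * s * c * kap + be)) with (kap * x + be)
      by (unfold z; field; lra).
    replace (exp (c * x)) with
      (exp (c * y + s * c * c) * exp (- (z * z)) * / exp (- (x - y) ^ 2 / (4 * s))).
    + field; repeat split; try lra; apply Rgt_not_eq, exp_pos.
    + rewrite <- exp_plus, <- exp_Ropp, <- exp_plus. f_equal. unfold z. rewrite <- Er. field. lra.
Qed.

(** * The Airy integral on a shifted contour *)

(* [airy_re A k t + i airy_im A k t = i ((k + i t) ^ 3 / 3 + A (k + i t))]. *)
Definition airy_re (A k t : R) := - (t * (k * k)) + t * t * t * (/ 3) - A * t.
Definition airy_im (A k t : R) := k * k * k * (/ 3) - k * (t * t) + A * k.
Definition airy_shifted (A s k : R) := exp (airy_re A k s) * cos (airy_im A k s).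

Lemma airy_shifted_0 A k : airy_shifted A 0 k = cos (k ^ 3 / 3 + A * k).
Proof.
  unfold airy_shifted, airy_re, airy_im.
  replace (- (0 * (k * k)) + 0 * 0 * 0 * / 3 - A * 0) with 0 by ring.
  rewrite exp_0, Rmult_1_l. f_equal; field.
Qed.

Lemma continuous_airy_shifted A s k : continuous (airy_shifted A s) k.
Proof. apply ex_derive_continuousR. unfold airy_shifted, airy_re, airy_im. auto_derive. auto. Qed.

Lemma airy_re_le A k s t : 0 <= t <= s ->
  airy_re A k t <= s * s * s * / 3 + Rabs A * s - t * (k * k).
Proof.
  intros Ht. unfold airy_re.
  generalize (Rle_abs A) (Rle_abs (- A)); rewrite Rabs_Ropp; intros.
  assert (t * t * t <= s * s * s).
  { assert (t * t <= s * s) by nra. assert (t * t * t <= s * s * t) by nra. nra. }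
  nra.
Qed.

Lemma RInt_exp_neg_lin_le c s : 0 < c -> 0 <= s -> RInt (fun t => exp (- (t * c))) 0 s <= / c.
Proof.
  intros Hc Hs.
  rewrite (is_RInt_unique _ _ _ _ (is_RInt_derive (fun t => - exp (- (t * c)) / c)
             (fun t => exp (- (t * c))) 0 s
             ltac:(intros; auto_derive; auto; field; lra)
             ltac:(intros; apply ex_derive_continuousR; auto_derive; auto))).
  unfold minus, plus, opp; simpl.
  replace (- (0 * c)) with 0 by ring. rewrite exp_0.
  assert (0 < exp (- (s * c))) by apply exp_pos.
  apply Rmult_le_reg_r with c; auto. field_simplify; lra.
Qed.

Lemma airy_vertical_lim A s : 0 <= s ->
  is_lim (fun b => RInt (fun t => exp (airy_re A b t) * sin (airy_im A b t)
                             - exp (airy_re A (- b) t) * sin (airy_im A (- b) t)) 0 s) p_infty 0.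
Proof.
  intros Hs. set (E := exp (s * s * s * / 3 + Rabs A * s)).
  assert (HE : 0 < E) by apply exp_pos.
  apply (is_lim_0_of_bound _ (2 * E)); intros b Hb.
  assert (K : forall c t, c * c = b * b -> 0 <= t <= s ->
            Rabs (exp (airy_re A c t) * sin (airy_im A c t)) <= E * exp (- (t * (b * b)))).
  { intros c t Hc Ht. rewrite Rabs_mult, (Rabs_right (exp _)) by (apply Rle_ge, Rlt_le, exp_pos).
    rewrite <- (Rmult_1_r (E * _)); unfold E; rewrite <- exp_plus.
    apply Rmult_le_compat; [apply Rlt_le, exp_pos | apply Rabs_pos | | apply Rabs_sin_le_1].
    apply exp_le_mono. rewrite <- Hc. generalize (airy_re_le A c s t Ht). lra. }
  eapply Rle_trans; [apply RInt_abs_le with (h := fun t => 2 * E * exp (- (t * (b * b)))); auto|].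
  - apply ex_RInt_continuousR; intros; apply ex_derive_continuousR.
    unfold airy_re, airy_im; auto_derive; auto.
  - apply ex_RInt_continuousR; intros; apply ex_derive_continuousR; auto_derive; auto.
  - intros t Ht. unfold Rminus at 1. eapply Rle_trans; [apply Rabs_triang|]. rewrite Rabs_Ropp.
    generalize (K b t eq_refl Ht) (K (- b) t ltac:(ring) Ht). lra.
  - rewrite RInt_scalR by (apply ex_RInt_continuousR; intros; apply ex_derive_continuousR;
                           auto_derive; auto).
    apply Rle_trans with (2 * E * / (b * b)).
    + apply Rmult_le_compat_l; [lra | apply RInt_exp_neg_lin_le; nra].
    + apply Rmult_le_compat_l; [lra|]. apply Rinv_le_contravar; nra.
Qed.

Lemma airy_contour_sym_lim A s L : 0 <= s ->
  is_RInt_line (airy_shifted A s) L ->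
  is_lim (fun b => RInt (airy_shifted A 0) (- b) b) p_infty L.
Proof.
  intros Hs HL.
  exact (contour_sym_lim (airy_re A) (airy_im A)
    (fun k t => - (k * k) + t * t - A) (fun k t => - (2 * k * t))
    ltac:(intros; unfold airy_re; auto_derive; auto; field)
    ltac:(intros; unfold airy_im; auto_derive; auto; field)
    ltac:(intros; unfold airy_re; auto_derive; auto; field)
    ltac:(intros; unfold airy_im; auto_derive; auto; field)
    ltac:(intros; unfold airy_re; continuity_2d) ltac:(intros; unfold airy_im; continuity_2d)
    ltac:(intros; continuity_2d) ltac:(intros; continuity_2d) s L HL (airy_vertical_lim A s Hs)).
Qed.

Lemma is_RInt_line_airy_shifted A s : 0 < s -> is_RInt_line (airy_shifted A s) (2 * PI * Ai A).
Proof.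
  intros Hs.
  set (E := exp (s * s * s * / 3 + Rabs A * s)).
  destruct (is_RInt_line_dominated (airy_shifted A s) (fun k => E * exp (- (s * (k * k))))
              (E * (sqrt PI / sqrt s))) as [L HL].
  - intros; apply ex_RInt_continuousR, continuous_airy_shifted.
  - intros k. unfold airy_shifted.
    rewrite Rabs_mult, (Rabs_right (exp _)) by (apply Rle_ge, Rlt_le, exp_pos).
    rewrite <- (Rmult_1_r (E * _)); unfold E; rewrite <- exp_plus.
    apply Rmult_le_compat; [apply Rlt_le, exp_pos | apply Rabs_pos | | apply Rabs_cos_le_1].
    apply exp_le_mono. generalize (airy_re_le A k s s ltac:(lra)). lra.
  - now apply is_RInt_line_scal, is_RInt_line_gauss_scaled.
  - assert (Hlim : is_lim (fun b => RInt (fun t => cos (t ^ 3 / 3 + A * t)) 0 b) p_infty (L / 2)).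
    { apply (is_lim_ext (fun b => / 2 * RInt (airy_shifted A 0) (- b) b)).
      - intros b. rewrite RInt_even.
        + rewrite (RInt_extR _ _ 0 b (airy_shifted_0 A)). field.
        + intros; apply ex_RInt_continuousR, continuous_airy_shifted.
        + intros x; rewrite !airy_shifted_0, <- cos_neg. f_equal; field.
      - replace (L / 2) with (/ 2 * L) by field.
        apply (is_lim_scal_l _ (/ 2) _ L), (airy_contour_sym_lim A s); auto; lra. }
    unfold Ai. rewrite (is_lim_unique _ _ _ Hlim). simpl.
    replace (2 * PI * (/ PI * (L / 2))) with L; [exact HL|].
    field. generalize PI_RGT_0; lra.
Qed.

(** * Fubini's theorem for improper integrals *)

Lemma continuous_RInt_param (g : R -> R -> R) a b k0 :
  (forall x k, continuity_2d_pt g x k) -> continuous (fun k => RInt (fun x => g x k) a b) k0.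
Proof.
  intros Hg.
  assert (Ex : forall k a b, ex_RInt (fun x => g x k) a b).
  { intros; apply ex_RInt_continuousR; intros; now apply continuity_2d_pt_continuous_l. }
  apply continuity_pt_filterlim; intros eps Heps.
  assert (Hab := Rabs_pos (b - a)).
  set (e' := eps / (Rabs (b - a) + 1)).
  assert (He' : 0 < e') by (apply Rdiv_lt_0_compat; lra).
  destruct (uniform_continuity_2d_1d g (Rmin a b) (Rmax a b) k0 ltac:(auto) (mkposreal e' He'))
    as [d Hd].
  exists d; split; [apply cond_pos|]; intros k [_ Hk]; simpl in *; unfold Rdist in *.
  rewrite <- RInt_minusR by auto.
  eapply Rle_lt_trans; [apply RInt_abs_le_const with (M := e'); [now apply ex_RInt_minusR|]|].
  - intros t Ht. left. generalize (cond_pos d); intros. apply Rabs_def2 in Hk.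
    apply Hd; auto; try lra. rewrite Rminus_diag, Rabs_R0; lra.
  - unfold e'. apply Rmult_lt_reg_r with (Rabs (b - a) + 1); [lra|].
    replace (Rabs (b - a) * (eps / (Rabs (b - a) + 1)) * (Rabs (b - a) + 1))
      with (Rabs (b - a) * eps) by (field; lra).
    nra.
Qed.

Lemma is_derive_RInt_RInt_upper (g : R -> R -> R) a b c d :
  (forall x k, continuity_2d_pt g x k) ->
  is_derive (fun d => RInt (fun x => RInt (fun k => g x k) c d) a b) d
    (RInt (fun x => g x d) a b).
Proof.
  intros Hg.
  set (G x d := RInt (fun k => g x k) c d).
  assert (DG : forall x d, is_derive (fun d => G x d) d (g x d)).
  { intros x d0. apply (is_derive_RInt (fun k => g x k) (RInt (fun k => g x k) c) c).
    - apply filter_forall; intros; apply (RInt_correct (V := R_CompleteNormedModule)).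
      apply ex_RInt_continuousR; intros; now apply continuity_2d_pt_continuous_r.
    - now apply continuity_2d_pt_continuous_r. }
  rewrite (RInt_extR _ (fun x => Derive (fun u => G x u) d))
    by (intros; symmetry; now apply is_derive_unique).
  apply (is_derive_RInt_param (fun d x => G x d)).
  - apply filter_forall; intros; eexists; apply DG.
  - intros t _. apply continuity_2d_pt_ext with (fun u v => g v u).
    + intros; symmetry; now apply is_derive_unique.
    + now apply continuity_2d_pt_swap.
  - apply filter_forall; intros; apply ex_RInt_continuousR; intros.
    apply (continuous_RInt_param (fun k x => g x k)); intros; now apply continuity_2d_pt_swap.
Qed.

Lemma RInt_RInt_swap (g : R -> R -> R) a b c d : (forall x k, continuity_2d_pt g x k) ->
  RInt (fun x => RInt (fun k => g x k) c d) a b = RInt (fun k => RInt (fun x => g x k) a b) c d.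
Proof.
  intros Hg.
  set (C k := RInt (fun x => g x k) a b).
  set (F d := RInt (fun x => RInt (fun k => g x k) c d) a b - RInt C c d).
  assert (DF : forall d, is_derive F d 0).
  { intros d0.
    assert (D2 : is_derive (fun d => RInt C c d) d0 (C d0)).
    { apply (is_derive_RInt C (RInt C c) c); [|now apply continuous_RInt_param].
      apply filter_forall; intros; apply (RInt_correct (V := R_CompleteNormedModule)).
      apply ex_RInt_continuousR; intros; now apply continuous_RInt_param. }
    assert (D := is_derive_minus _ _ _ _ _ (is_derive_RInt_RInt_upper g a b c d0 Hg) D2).
    unfold minus, plus, opp in D; simpl in D. now rewrite Rplus_opp_r in D. }
  assert (Fc : F c = 0).
  { unfold F. rewrite RInt_point.
    rewrite (RInt_extR _ (fun x => 0)) by (intros; now rewrite RInt_point).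
    rewrite RInt_constR. unfold zero; simpl. ring. }
  assert (Fd := is_derive_0_const F d c DF).
  unfold F, C in *. as_R_eq. lra.
Qed.

Section ImproperFubini.
Variables (g : R -> R -> R) (h1 h2 A B : R -> R) (I1 I2 : R).
Hypothesis Hg : forall x k, continuity_2d_pt g x k.
Hypothesis Hh1 : forall x, 0 <= h1 x.
Hypothesis Hh2 : forall k, 0 <= h2 k.
Hypothesis Hgh : forall x k, Rabs (g x k) <= h1 x * h2 k.
Hypothesis HI1 : is_RInt_line h1 I1.
Hypothesis HI2 : is_RInt_line h2 I2.
Hypothesis HA : forall x, is_RInt_line (fun k => g x k) (A x).
Hypothesis HB : forall k, is_RInt_line (fun x => g x k) (B k).

Lemma truncated_inner_uniform_lim (c : R -> R) M : (forall x, h1 (c x) <= M) ->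
  filterlim (fun K x => RInt (fun k => g (c x) k) (- K) K) (Rbar_locally p_infty)
    (locally (fun x => A (c x))).
Proof.
  intros HM.
  apply (proj2 (@filterlim_locally _ (fct_UniformSpace R R_UniformSpace) _ _ _ _)); intros eps.
  assert (HM0 : 0 <= M) by (generalize (Hh1 (c 0)) (HM 0); lra).
  destruct (proj2 HI2 (eps / (M + 1))) as [K0 HK0];
    [apply Rdiv_lt_0_compat; [apply cond_pos | lra]|].
  exists (Rabs K0); intros K HK x.
  change (Rabs (RInt (fun k => g (c x) k) (- K) K - A (c x)) < eps).
  generalize (Rle_abs K0) (Rle_abs (- K0)); rewrite Rabs_Ropp; intros.
  assert (T := is_RInt_line_tail_le _ h2 _ I2 (h1 (c x)) (- K) K (HA (c x)) HI2 (Hh1 _)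
                 (Hgh (c x)) ltac:(lra)).
  specialize (HK0 (- K) K ltac:(lra) ltac:(lra)). apply Rabs_def2 in HK0.
  assert (P := is_RInt_line_RInt_le h2 I2 (- K) K Hh2 HI2 ltac:(lra)).
  rewrite Rabs_minus_sym. eapply Rle_lt_trans; [exact T|].
  assert (Pe := cond_pos eps). generalize (Hh1 (c x)) (HM x); intros.
  apply Rle_lt_trans with (M * (eps / (M + 1))); [apply Rmult_le_compat; lra|].
  apply Rmult_lt_reg_r with (M + 1); [lra|].
  replace (M * (eps / (M + 1)) * (M + 1)) with (M * eps) by (field; lra). nra.
Qed.

Lemma is_RInt_truncated_lim a1 a2 : a1 <= a2 ->
  exists If, is_RInt A a1 a2 If /\
    is_lim (fun K => RInt (fun x => RInt (fun k => g x k) (- K) K) a1 a2) p_infty If.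
Proof.
  intros Ha.
  destruct (ex_RInt_ub h1 a1 a2 (proj1 HI1 a1 a2)) as [M1 HM1].
  (* Clamping [x] to [[a1, a2]] makes the truncated inner integrals converge uniformly on [R]. *)
  set (cl x := Rmax a1 (Rmin a2 x)).
  assert (Hcl : forall x, Rmin a1 a2 <= x <= Rmax a1 a2 -> cl x = x).
  { intros x Hx; rewrite Rmin_left, Rmax_right in Hx by lra; unfold cl.
    rewrite Rmin_right, Rmax_right by lra; auto. }
  assert (Hh1cl : forall x, h1 (cl x) <= M1).
  { intros x. eapply Rle_trans; [apply Rle_abs | apply HM1].
    rewrite Rmin_left, Rmax_right by lra. unfold cl. split; [apply Rmax_l|].
    apply Rmax_lub; [lra | apply Rmin_l]. }
  set (hK (K : R) := RInt (fun x => RInt (fun k => g x k) (- K) K) a1 a2).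
  assert (Hf : forall K, is_RInt (fun x => RInt (fun k => g (cl x) k) (- K) K) a1 a2 (hK K)).
  { intros K. apply (is_RInt_ext (fun x => RInt (fun k => g x k) (- K) K)).
    - intros x Hx. rewrite Hcl; auto; lra.
    - apply (RInt_correct (V := R_CompleteNormedModule)), ex_RInt_continuousR; intros z.
      apply (continuous_RInt_param (fun k x => g x k)); intros; now apply continuity_2d_pt_swap. }
  destruct (filterlim_RInt _ a1 a2 (Rbar_locally p_infty) _ _ hK Hf
              (truncated_inner_uniform_lim cl M1 Hh1cl)) as [If [HIf1 HIf2]].
  exists If; split; [|exact HIf1].
  apply (is_RInt_ext (fun x => A (cl x))); auto.
  intros x Hx. rewrite Hcl; auto; lra.
Qed.

Lemma is_RInt_truncated_dist_le L a1 a2 : is_RInt_line B L -> a1 <= a2 ->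
  exists If, is_RInt A a1 a2 If /\ Rabs (If - L) <= I2 * (I1 - RInt h1 a1 a2).
Proof.
  intros HL Ha.
  destruct (is_RInt_truncated_lim a1 a2 Ha) as [If [HIf Hlim]].
  exists If; split; [exact HIf|].
  set (tau := I1 - RInt h1 a1 a2).
  assert (Htau : 0 <= tau)
    by (unfold tau; generalize (is_RInt_line_RInt_le h1 I1 a1 a2 Hh1 HI1 Ha); lra).
  set (C k := RInt (fun x => g x k) a1 a2).
  assert (ExC : forall c d, ex_RInt C c d).
  { intros; apply ex_RInt_continuousR; intros; now apply continuous_RInt_param. }
  assert (HCB : forall k, Rabs (C k - B k) <= tau * h2 k).
  { intros k. rewrite Rabs_minus_sym, Rmult_comm.
    apply (is_RInt_line_tail_le (fun x => g x k) h1 (B k) I1 (h2 k) a1 a2 (HB k) HI1 (Hh2 k));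
      auto.
    intros; rewrite Rmult_comm; auto. }
  assert (Hdist : is_lim (fun K => Rabs (RInt C (- K) K - RInt B (- K) K)) p_infty
                    (Rabs (If - L))).
  { apply (is_lim_Rabs _ _ (If - L)), is_lim_minus'; [|now apply is_RInt_line_sym_lim].
    refine (is_lim_ext _ _ _ _ _ Hlim); intros K. now apply RInt_RInt_swap. }
  enough (Hev : Rbar_locally' p_infty
                  (fun K => Rabs (RInt C (- K) K - RInt B (- K) K) <= I2 * tau))
    by exact (is_lim_le_loc _ _ _ _ _ Hev Hdist (is_lim_const _ _)).
  exists 0; intros K HK. rewrite Rmult_comm.
  rewrite <- RInt_minusR by (auto; apply HL).
  eapply Rle_trans.
  - apply RInt_abs_le with (h := fun k => tau * h2 k); auto; try lra.
    + apply ex_RInt_minusR; auto; apply HL.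
    + apply ex_RInt_scalR, HI2.
  - rewrite RInt_scalR by apply HI2.
    apply Rmult_le_compat_l; auto. apply is_RInt_line_RInt_le; auto; lra.
Qed.

Theorem is_RInt_line_fubini L : is_RInt_line B L -> is_RInt_line A L.
Proof.
  intros HL.
  assert (HI2p : 0 <= I2).
  { apply Rle_trans with (RInt h2 0 0); [rewrite RInt_point; unfold zero; simpl; lra|].
    apply is_RInt_line_RInt_le; auto; lra. }
  split.
  - intros a b. destruct (Rle_dec a b) as [Hab|Hab].
    + destruct (is_RInt_truncated_dist_le L a b HL Hab) as [If [HI _]]. now exists If.
    + destruct (is_RInt_truncated_dist_le L b a HL ltac:(lra)) as [If [HI _]].
      apply ex_RInt_swap. now exists If.
  - intros eps Heps.
    destruct (proj2 HI1 (eps / (I2 + 1))) as [M HM]; [apply Rdiv_lt_0_compat; lra|].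
    exists (Rabs M); intros a b Ha Hb.
    generalize (Rle_abs M) (Rle_abs (- M)) (Rabs_pos M); rewrite Rabs_Ropp; intros.
    destruct (is_RInt_truncated_dist_le L a b HL ltac:(lra)) as [If [HI HIL]].
    rewrite (is_RInt_unique (V := R_CompleteNormedModule) _ _ _ _ HI).
    specialize (HM a b ltac:(lra) ltac:(lra)). apply Rabs_def2 in HM.
    eapply Rle_lt_trans; [exact HIL|].
    apply Rle_lt_trans with (I2 * (eps / (I2 + 1))); [apply Rmult_le_compat_l; lra|].
    apply Rmult_lt_reg_r with (I2 + 1); [lra|].
    replace (I2 * (eps / (I2 + 1)) * (I2 + 1)) with (I2 * eps) by (field; lra). nra.
Qed.

End ImproperFubini.

(** * The heat flow of the Airy functions *)

Lemma is_RInt_line_Ai_s t x s : 0 < s ->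
  is_RInt_line (fun k => exp (2 * t ^ 3 / 3 + x * t) * airy_shifted (t ^ 2 + x) s k)
    (2 * PI * Ai_s t x).
Proof.
  intros Hs. unfold Ai_s.
  replace (2 * PI * (exp (2 * t ^ 3 / 3 + x * t) * Ai (t ^ 2 + x)))
    with (exp (2 * t ^ 3 / 3 + x * t) * (2 * PI * Ai (t ^ 2 + x))) by ring.
  now apply is_RInt_line_scal, is_RInt_line_airy_shifted.
Qed.

Definition airy_phase (t k : R) := k ^ 3 / 3 - k + t ^ 2 * k.
Definition airy_const (t : R) := exp (2 * t ^ 3 / 3 + 1 / 3 - t ^ 2).

Lemma Ai_s_integrand_split t x k :
  exp (2 * t ^ 3 / 3 + x * t) * airy_shifted (t ^ 2 + x) 1 k =
  airy_const t * gauss k * (exp ((t - 1) * x) * cos (k * x + airy_phase t k)).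
Proof.
  unfold airy_shifted, airy_const, gauss, airy_phase, airy_re, airy_im.
  replace (k * x + (k ^ 3 / 3 - k + t ^ 2 * k))
    with (k * k * k * / 3 - k * (1 * 1) + (t ^ 2 + x) * k) by field.
  rewrite <- !Rmult_assoc. f_equal. rewrite <- !exp_plus. f_equal. field.
Qed.

(* Heat flow for time [s] turns the contour height [1] into [1 + s] and [t] into [t + s]. *)
Lemma Ai_s_integrand_heat t s y k :
  airy_const t * gauss k *
    (exp ((t - 1) * y + s * ((t - 1) * (t - 1) - k * k))
     * cos (k * y + airy_phase t k + 2 * s * (t - 1) * k)) =
  exp (2 * (t + s) ^ 3 / 3 + y * (t + s)) * airy_shifted ((t + s) ^ 2 + y) (1 + s) k.
Proof.
  unfold airy_shifted, airy_const, gauss, airy_phase, airy_re, airy_im.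
  replace (k * y + (k ^ 3 / 3 - k + t ^ 2 * k) + 2 * s * (t - 1) * k)
    with (k * k * k * / 3 - k * ((1 + s) * (1 + s)) + ((t + s) ^ 2 + y) * k) by field.
  rewrite <- !Rmult_assoc. f_equal. rewrite <- !exp_plus. f_equal. field.
Qed.

Lemma Ai_s_integrand_bound t s x y k : 0 < s ->
  Rabs (exp (2 * t ^ 3 / 3 + x * t) * airy_shifted (t ^ 2 + x) 1 k * phi_heat s x y) <=
  airy_const t * (exp ((t - 1) * x) * cos (0 * x + 0) * phi_heat s x y) * gauss k.
Proof.
  intros Hs. rewrite Ai_s_integrand_split.
  rewrite Rmult_0_l, Rplus_0_l, cos_0, Rmult_1_r.
  assert (Hc := exp_pos (2 * t ^ 3 / 3 + 1 / 3 - t ^ 2)). fold (airy_const t) in Hc.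
  assert (He := exp_pos ((t - 1) * x)). assert (Hg := gauss_pos k).
  assert (Hp := phi_heat_pos s x y Hs).
  assert (Hcos := Rabs_cos_le_1 (k * x + airy_phase t k)).
  rewrite !Rabs_mult, (Rabs_right (airy_const t)), (Rabs_right (gauss k)),
    (Rabs_right (exp _)), (Rabs_right (phi_heat s x y)) by lra.
  replace (airy_const t * (exp ((t - 1) * x) * phi_heat s x y) * gauss k)
    with (airy_const t * gauss k * exp ((t - 1) * x) * 1 * phi_heat s x y) by ring.
  apply Rmult_le_compat_r; [lra|]. rewrite <- Rmult_assoc.
  apply Rmult_le_compat_l; [|exact Hcos]. apply Rmult_le_pos; [apply Rmult_le_pos|]; lra.
Qed.

Lemma is_RInt_line_Ai_s_heat t s y : 0 < s ->
  is_RInt_line (fun x => Ai_s t x * phi_heat s x y) (Ai_s (t + s) y).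
Proof.
  intros Hs. assert (HPI := PI_RGT_0).
  apply is_RInt_line_ext with (fun x => / (2 * PI) * (2 * PI * (Ai_s t x * phi_heat s x y)));
    [intros; field; lra|].
  replace (Ai_s (t + s) y) with (/ (2 * PI) * (2 * PI * Ai_s (t + s) y)) by (field; lra).
  apply is_RInt_line_scal.
  apply (is_RInt_line_fubini
    (fun x k => exp (2 * t ^ 3 / 3 + x * t) * airy_shifted (t ^ 2 + x) 1 k * phi_heat s x y)
    (fun x => airy_const t * (exp ((t - 1) * x) * cos (0 * x + 0) * phi_heat s x y)) gauss
    _ (fun k => airy_const t * gauss k * (exp ((t - 1) * y + s * ((t - 1) * (t - 1) - k * k))
                                         * cos (k * y + airy_phase t k + 2 * s * (t - 1) * k)))
    (airy_const t * (exp ((t - 1) * y + s * ((t - 1) * (t - 1) - 0 * 0))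
                     * cos (0 * y + 0 + 2 * s * (t - 1) * 0)))
    (sqrt PI)).
  - intros x k. unfold airy_shifted, airy_re, airy_im, phi_heat. continuity_2d; lra.
  - intros x. rewrite Rmult_0_l, Rplus_0_l, cos_0, Rmult_1_r.
    generalize (exp_pos (2 * t ^ 3 / 3 + 1 / 3 - t ^ 2)) (exp_pos ((t - 1) * x))
      (phi_heat_pos s x y Hs); fold (airy_const t); intros. apply Rlt_le, Rmult_lt_0_compat; nra.
  - intros k; apply Rlt_le, gauss_pos.
  - intros x k; now apply Ai_s_integrand_bound.
  - apply is_RInt_line_scal, is_RInt_line_heat_exp_cos; auto.
  - apply is_RInt_line_gauss.
  - intros x.
    apply is_RInt_line_ext with (fun k => phi_heat s x y *
      (exp (2 * t ^ 3 / 3 + x * t) * airy_shifted (t ^ 2 + x) 1 k)); [intros; ring|].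
    replace (2 * PI * (Ai_s t x * phi_heat s x y))
      with (phi_heat s x y * (2 * PI * Ai_s t x)) by ring.
    apply is_RInt_line_scal, is_RInt_line_Ai_s; lra.
  - intros k.
    apply is_RInt_line_ext with (fun x => airy_const t * gauss k *
      (exp ((t - 1) * x) * cos (k * x + airy_phase t k) * phi_heat s x y)).
    + intros x. rewrite Ai_s_integrand_split; ring.
    + apply is_RInt_line_scal, is_RInt_line_heat_exp_cos; auto.
  - apply is_RInt_line_ext with
      (fun k => exp (2 * (t + s) ^ 3 / 3 + y * (t + s)) * airy_shifted ((t + s) ^ 2 + y) (1 + s) k).
    + intros k; now rewrite Ai_s_integrand_heat.
    + apply is_RInt_line_Ai_s; lra.
Qed.

(** * The method of images *)

Lemma is_RInt_gen_fold_nonpos (F : R -> R) L : is_RInt_line F L ->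
  is_RInt_gen (fun w => F w + F (- w)) (Rbar_locally m_infty) (at_point 0) L.
Proof.
  intros [HF HL] P [eps HP].
  destruct (HL eps (cond_pos eps)) as [M HM].
  apply (Filter_prod _ _ _ (fun a => a < - Rabs M) (fun b => b = 0)); [now exists (- Rabs M)|easy|].
  intros a b Ha ->.
  generalize (Rle_abs M) (Rle_abs (- M)); rewrite Rabs_Ropp; intros.
  exists (RInt (fun w => F w + F (- w)) a 0); split.
  - apply (RInt_correct (V := R_CompleteNormedModule)), ex_RInt_plusR; auto.
    now apply ex_RInt_comp_oppR.
  - apply HP.
    rewrite RInt_plusR, RInt_comp_oppR, Ropp_0, (RInt_swapR F 0 (- a)), Ropp_involutive,
      RInt_ChaslesR by (auto; now apply ex_RInt_comp_oppR).
    exact (HM a (- a) ltac:(lra) ltac:(lra)).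
Qed.

Lemma phi_heat_opp_l s x y : phi_heat s (- x) y = phi_heat s x (- y).
Proof. unfold phi_heat. do 4 f_equal. ring. Qed.

Lemma phi_heat_opp s x y : phi_heat s (- x) (- y) = phi_heat s x y.
Proof. unfold phi_heat. do 4 f_equal. ring. Qed.

Lemma phi_heat_sym s x y : phi_heat s x y = phi_heat s y x.
Proof. unfold phi_heat. do 4 f_equal. ring. Qed.

Lemma T0_sym t1 t2 u v : T0 t1 t2 u v = T0 t1 t2 v u.
Proof.
  unfold T0. f_equal; [apply phi_heat_sym|].
  rewrite <- phi_heat_opp_l. apply phi_heat_sym.
Qed.

(* The odd extension of [w |-> a (c + w)] against the killed kernel on [R_-] is its
   convolution with the free kernel on [R]. *)
Lemma is_RInt_gen_images (a a2 : R -> R) s c v :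
  (forall y, is_RInt_line (fun x => a x * phi_heat s x y) (a2 y)) ->
  is_RInt_gen (fun w => (a (c + w) - a (c - w)) * (phi_heat s w v - phi_heat s w (- v)))
    (Rbar_locally m_infty) (at_point 0) (a2 (c + v) - a2 (c - v)).
Proof.
  intros Ha.
  assert (Hshift : forall y, is_RInt_line (fun w => a (c + w) * phi_heat s w y) (a2 (c + y))).
  { intros y. assert (H := is_RInt_line_comp_lin _ _ 1 c ltac:(lra) (Ha (c + y))).
    rewrite Rdiv_1_r in H. revert H; apply is_RInt_line_ext; intros w.
    replace (1 * w + c) with (c + w) by ring. f_equal. unfold phi_heat. do 4 f_equal. ring. }
  assert (H := is_RInt_gen_fold_nonpos _ _ (is_RInt_line_minus _ _ _ _ (Hshift v) (Hshift (- v)))).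
  replace (c + - v) with (c - v) in H by ring.
  replace (fun w => (a (c + w) - a (c - w)) * (phi_heat s w v - phi_heat s w (- v)))
    with (fun w => a (c + w) * phi_heat s w v - a (c + w) * phi_heat s w (- v)
                   + (a (c + - w) * phi_heat s (- w) v - a (c + - w) * phi_heat s (- w) (- v)));
    [exact H|].
  apply functional_extensionality; intros w.
  rewrite phi_heat_opp_l, phi_heat_opp. replace (c + - w) with (c - w) by ring. ring.
Qed.

Theorem proposition7p3 (Rc t1 t2 : R) (Ht : t1 < t2) :
  forall xi zeta u v : R, u <= 0 -> v <= 0 ->
    is_RInt_gen (fun w => Phi Rc xi t1 w * T0 t1 t2 w v)
      (Rbar_locally m_infty) (at_point 0) (Phi Rc xi t2 v) /\
    is_RInt_gen (fun w => T0 t1 t2 u w * Psi Rc zeta t2 w)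
      (Rbar_locally m_infty) (at_point 0) (Psi Rc zeta t1 u).
Proof.
  (* The identities hold for all real [u] and [v]. *)
  intros xi zeta u v _ _.
  assert (Hs : 0 < t2 - t1) by lra.
  split.
  - apply (is_RInt_gen_images (Ai_s t1) (Ai_s t2) (t2 - t1) (Rc + xi) v); intros y.
    assert (H := is_RInt_line_Ai_s_heat t1 (t2 - t1) y Hs).
    now replace (t1 + (t2 - t1)) with t2 in H by ring.
  - replace (fun w => T0 t1 t2 u w * Psi Rc zeta t2 w)
      with (fun w => Psi Rc zeta t2 w * T0 t1 t2 w u)
      by (apply functional_extensionality; intros w; rewrite T0_sym; ring).
    apply (is_RInt_gen_images (Ai_s (- t2)) (Ai_s (- t1)) (t2 - t1) (Rc + zeta) u); intros y.
    assert (H := is_RInt_line_Ai_s_heat (- t2) (t2 - t1) y Hs).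
    now replace (- t2 + (t2 - t1)) with (- t1) in H by ring.
Qed.
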